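(* Let $a,x\in \mathcal{A}$. Then the following are equivalent: (1) $x$ is the $w$-weighted core inverse of $a$. (2) $a(wx)^2=x$, $xw(aw)^2=aw$, $[(waw)x]^*=(waw)x$, $(waw)x(waw)=waw$, $x(waw)x=x$.
   Context: $\mathcal{A}$ is a complex Banach *-algebra with identity and $w\in\mathcal{A}$. The $w$-weighted core inverse of $a$ is the unique $x$ with $a(wx)^2=x$, $(wawx)^*=wawx$, $xw(aw)^2=aw$. *)

From HB Require Import structures.
From mathcomp Require Import all_boot all_order all_algebra.
From mathcomp Require Import reals.
From mathcomp.real_closed Require Import complex.
Set Implicit Arguments. Unset Strict Implicit. Unset Printing Implicit Defensive.
Import Order.TTheory GRing.Theory Num.Theory.
Local Open Scope ring_scope.
Local Open Scope complex_scope.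

Record is_banach_star_algebra (R : realType) (A : algType R[i])
    (nrm : A -> R) (star : A -> A) : Prop := {
  nrm_ge0 : forall a, 0 <= nrm a;
  nrm_eq0 : forall a, nrm a = 0 -> a = 0;
  nrm_triangle : forall a b, nrm (a + b) <= nrm a + nrm b;
  nrm_scale : forall (c : R[i]) a, nrm (c *: a) = complex.Re `|c| * nrm a;
  nrm_submult : forall a b, nrm (a * b) <= nrm a * nrm b;
  nrm_one : nrm 1 = 1;
  nrm_complete : forall u : nat -> A,
    (forall e : R, 0 < e -> exists N : nat, forall m n : nat,
        (N <= m)%N -> (N <= n)%N -> nrm (u m - u n) < e) ->
    exists l : A, forall e : R, 0 < e -> exists N : nat, forall n : nat,
        (N <= n)%N -> nrm (u n - l) < e;
  star_add : forall a b, star (a + b) = star a + star b;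
  star_scale : forall (c : R[i]) a, star (c *: a) = c^* *: star a;
  star_mul : forall a b, star (a * b) = star b * star a;
  star_invol : forall a, star (star a) = a
}.

Definition w_core_inverse (A : nzRingType) (star : A -> A) (w a x : A) : Prop :=
  [/\ a * (w * x) ^+ 2 = x,
      star (w * a * w * x) = w * a * w * x
    & x * w * (a * w) ^+ 2 = a * w].

From HB Require Import structures.
From mathcomp Require Import all_boot all_order all_algebra.
From mathcomp Require Import reals.
From mathcomp.real_closed Require Import complex.
Import GRing.Theory Num.Theory.
Local Open Scope ring_scope.

Section WeightedCoreEquations.

Variable R : pzSemiRingType.
Variables w a x : R.

Hypothesis wcore_left : a * (w * x) ^+ 2 = x.
Hypothesis wcore_right : x * w * (a * w) ^+ 2 = a * w.

Let wx_expand : w * x = w * a * w * x * w * x.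
Proof. by rewrite -{1}wcore_left expr2 !mulrA. Qed.

Let waw_expand : w * a * w = w * x * w * a * w * a * w.
Proof. by rewrite -mulrA -{1}wcore_right expr2 !mulrA. Qed.

Lemma wcore_inner_regular : (w * a * w) * x * (w * a * w) = w * a * w.
Proof. by rewrite {2}waw_expand !mulrA -wx_expand -waw_expand. Qed.

Lemma wcore_outer_regular : x * (w * a * w) * x = x.
Proof.
rewrite -{2}wcore_left expr2 !mulrA.
have -> : x * w * a * w * a * w = a * w by rewrite -wcore_right expr2 !mulrA.
by rewrite -{3}wcore_left expr2 !mulrA.
Qed.

End WeightedCoreEquations.

Theorem corollary2p3 (R : realType) (A : algType R[i]) (nrm : A -> R)
  (star : A -> A) (HA : is_banach_star_algebra nrm star) (w a x : A) :
  w_core_inverse star w a x <->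
  [/\ a * (w * x) ^+ 2 = x,
      x * w * (a * w) ^+ 2 = a * w,
      star ((w * a * w) * x) = (w * a * w) * x,
      (w * a * w) * x * (w * a * w) = w * a * w
    & x * (w * a * w) * x = x].
Proof.
split; last by case=> eq_left eq_right eq_sym _ _; split.
case=> eq_left eq_sym eq_right; split=> //.
- exact: wcore_inner_regular.
- exact: wcore_outer_regular.
Qed.
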